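(* Let $M=(S,\mathrm{Act},P)$ be an MDP and $T\subseteq S$. Let $(x,r)\in[0,1]^S\times\mathbb{N}_\infty^S$ satisfy: (1) $D^{\max}(r)\le r$; (2) $x\le B^{\min}(x)$; (3) for all $s\in S\setminus T$, $x(s)>0$ implies $r(s)<\infty$ (all inequalities between functions pointwise). Then $\Pr^{\min}_s(\Diamond T)\ge x(s)$ for all $s\in S$.
   Context: An MDP is a tuple $M=(S,\mathrm{Act},P)$ with $S$ finite, $\mathrm{Act}$ finite, $P\colon S\times\mathrm{Act}\times S\to[0,1]$ with $\sum_{s'}P(s,a,s')\in\{0,1\}$; $\mathrm{Act}(s)=\{a\mid\sum_{s'}P(s,a,s')=1\}$ is nonempty for all $s$; $\mathrm{Post}(s,a)=\{s'\mid P(s,a,s')>0\}$. A strategy is $\sigma\colon S\to\mathrm{Act}$ with $\sigma(s)\in\mathrm{Act}(s)$, inducing a Markov chain with transitions $P(s,\sigma(s),\cdot)$; $\Pr^\sigma_s(\Diamond T)$ is the probability of visiting $T$ from $s$ and $\Pr^{\min}_s(\Diamond T)=\min_\sigma\Pr^\sigma_s(\Diamond T)$. $\mathbb{N}_\infty=\mathbb{N}\cup\{\infty\}$, $1+\infty=\infty$. $D^{\max}(r)(s)=0$ for $s\in T$ and $1+\max_{a\in\mathrm{Act}(s)}\min_{s'\in\mathrm{Post}(s,a)}r(s')$ for $s\notin T$. $B^{\min}(x)(s)=1$ for $s\in T$ and $\min_{a\in\mathrm{Act}(s)}\sum_{s'\in\mathrm{Post}(s,a)}P(s,a,s')x(s')$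 for $s\notin T$. *)

From mathcomp Require Import all_boot all_order all_algebra.
From mathcomp Require Import classical_sets boolp reals.
Set Implicit Arguments. Unset Strict Implicit. Unset Printing Implicit Defensive.
Import Order.TTheory GRing.Theory Num.Theory.
Local Open Scope ring_scope.
Local Open Scope classical_set_scope.

Section MDP.
Context {R : realType} {S A : finType}.

Definition is_MDP (P : S -> A -> S -> R) : Prop :=
  (forall s a s', 0 <= P s a s' <= 1) /\
  (forall s a, \sum_(s' : S) P s a s' = 0 \/ \sum_(s' : S) P s a s' = 1) /\
  (forall s, exists a, \sum_(s' : S) P s a s' = 1).

Definition Act (P : S -> A -> S -> R) (s : S) (a : A) : bool :=
  \sum_(s' : S) P s a s' == 1.

Definition Post (P : S -> A -> S -> R) (s : S) (a : A) (s' : S) : bool :=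
  0 < P s a s'.

Definition is_strategy (P : S -> A -> S -> R) (sigma : S -> A) : Prop :=
  forall s, Act P s (sigma s).

Fixpoint reach_within (P : S -> A -> S -> R) (T : {set S}) (sigma : S -> A)
    (n : nat) (s : S) : R :=
  if s \in T then 1 else
  match n with
  | 0 => 0
  | n'.+1 => \sum_(s' : S) P s (sigma s) s' * reach_within P T sigma n' s'
  end.

(* Pr^sigma_s(<> T): probability of eventually visiting T
   (= sup over n of the probability of visiting T within n steps,
    by continuity of the path measure). *)
Definition Pr_reach (P : S -> A -> S -> R) (T : {set S}) (sigma : S -> A)
    (s : S) : R :=
  sup (range (fun n => reach_within P T sigma n s)).

(* Pr^min_s(<> T) = min over strategies (a finite nonempty set, so inf = min). *)
Definition Pr_min_reach (P : S -> A -> S -> R) (T : {set S}) (s : S) : R :=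
  inf [set Pr_reach P T sigma s | sigma in is_strategy P].

(* N_infty = nat + {infty}, encoded as option nat with None = infty. *)
Definition ninf := option nat.
Definition ninf_le (a b : ninf) : bool :=
  match a, b with
  | _, None => true
  | None, Some _ => false
  | Some m, Some n => (m <= n)%N
  end.
Definition ninf_min (a b : ninf) : ninf := if ninf_le a b then a else b.
Definition ninf_max (a b : ninf) : ninf := if ninf_le a b then b else a.
Definition ninf_succ (a : ninf) : ninf := omap succn a.

(* D^max(r)(s) = 0 if s in T,
   1 + max_{a in Act(s)} min_{s' in Post(s,a)} r(s') otherwise.
   (Act(s) and Post(s,a) are nonempty, so the neutral elements 0 and infty
    of the max/min are never the result of an empty max/min.) *)
Definition Dmax (P : S -> A -> S -> R) (T : {set S}) (r : S -> ninf) (s : S)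
  : ninf :=
  if s \in T then Some 0%N else
  ninf_succ (\big[ninf_max/Some 0%N]_(a | Act P s a)
               \big[ninf_min/None]_(s' | Post P s a s') r s').

(* B^min(x)(s) = 1 if s in T,
   min_{a in Act(s)} sum_{s' in Post(s,a)} P(s,a,s') x(s') otherwise.
   (Act(s) is nonempty; the min is taken via the real infimum of the
    finite nonempty set of values.) *)
Definition Bmin (P : S -> A -> S -> R) (T : {set S}) (x : S -> R) (s : S) : R :=
  if s \in T then 1 else
  inf [set (\sum_(s' | Post P s a s') P s a s' * x s') | a in [set a | Act P s a]].

End MDP.

From mathcomp Require Import all_boot all_order all_algebra.
From mathcomp Require Import classical_sets boolp reals.

(* Fix a memoryless strategy sigma and let z := Pr^sigma(<> T). Then z = 1 on T
   and z is superharmonic off T for the Markov chain of sigma, while x <= 1 on T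
   and x <= B^min(x) makes x subharmonic off T. So w := x - z is subharmonic off
   T and nonpositive on T, and a discrete maximum principle gives w <= 0: if the
   maximum m of w were positive it would be attained off T where x > 0, hence r
   is finite there, and D^max(r) <= r provides a successor of positive
   probability and strictly smaller rank; by induction on the rank, no state
   attains m. *)

Set Implicit Arguments. Unset Strict Implicit. Unset Printing Implicit Defensive.
Import Order.TTheory GRing.Theory Num.Theory.
Local Open Scope ring_scope.
Local Open Scope classical_set_scope.

Section WeightedSums.
Variables (R : realType) (I : finType).

Lemma uniform_sup_adherent (f : I -> nat -> R) (e : R) :
  (forall i, {homo f i : m n / (m <= n)%N >-> m <= n}) ->
  (forall i, has_ubound (range (f i))) -> 0 < e ->
  exists N, forall i, sup (range (f i)) - e < f i N.
Proof.
move=> f_nd f_ub e_gt0.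
have /fin_all_exists [n f_n] : forall i, exists k, sup (range (f i)) - e < f i k.
  move=> i; have f_sup : has_sup (range (f i)) by split; [exists (f i 0%N), 0%N | ].
  by have [_ [k _ <-] ?] := sup_adherent e_gt0 f_sup; exists k.
exists (\max_i n i) => i; apply: lt_le_trans (f_n i) _; apply: f_nd; exact: leq_bigmax.
Qed.

Variable q : I -> R.
Hypothesis q_ge0 : forall i, 0 <= q i.
Hypothesis q_sum1 : \sum_i q i = 1.

Lemma convex_comb_lt (w : I -> R) (m : R) (i0 : I) :
  (forall i, w i <= m) -> 0 < q i0 -> w i0 < m -> \sum_i q i * w i < m.
Proof.
move=> w_le_m q_i0 w_i0; rewrite -subr_lt0.
have -> : \sum_i q i * w i - m = \sum_i q i * (w i - m).
  by rewrite (eq_bigr _ (fun i _ => mulrBr _ _ _)) sumrB -mulr_suml q_sum1 mul1r.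
rewrite (bigD1 i0) //= -[X in _ < X](addr0 0); apply: ltr_leD.
  by rewrite pmulr_rlt0 // subr_lt0.
by apply: sumr_le0 => i _; rewrite mulr_ge0_le0 // subr_le0.
Qed.

Lemma sum_sup_le (f : I -> nat -> R) (b : R) :
  (forall i, {homo f i : m n / (m <= n)%N >-> m <= n}) ->
  (forall i, has_ubound (range (f i))) ->
  (forall n, \sum_i q i * f i n <= b) ->
  \sum_i q i * sup (range (f i)) <= b.
Proof.
move=> f_nd f_ub sum_le_b; apply/ler_addgt0Pr => e e_gt0.
have [N f_N] := uniform_sup_adherent f_nd f_ub e_gt0.
apply: (@le_trans _ _ (\sum_i q i * f i N + e)); last by rewrite lerD2r.
rewrite -[e in _ + e]mul1r -q_sum1 mulr_suml -big_split /=.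
apply: ler_sum => i _; rewrite -mulrDr ler_wpM2l //.
by rewrite -lerBlDr ltW.
Qed.

End WeightedSums.

Section MaximumPrinciple.
Variables (R : realType) (S : finType) (Q : S -> S -> R) (T : {set S}).
Hypothesis Q_ge0 : forall u v, 0 <= Q u v.
Hypothesis Q_row_sum : forall u, u \notin T -> \sum_v Q u v = 1.

Lemma subharmonic_le0 (w : S -> R) (rk : S -> nat) :
  (forall u, u \in T -> w u <= 0) ->
  (forall u, u \notin T -> w u <= \sum_v Q u v * w v) ->
  (forall u, u \notin T -> 0 < w u -> exists2 v, 0 < Q u v & (rk v < rk u)%N) ->
  forall u, w u <= 0.
Proof.
move=> w_T w_sub w_desc u.
pose m := [arg max_(s > u) w s]%O.
have w_le_m v : w v <= w m.
  by rewrite /m; case: (arg_maxP w (erefl : predT u)) => s _; apply.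
apply: le_trans (w_le_m u) _; rewrite leNgt; apply/negP => m_gt0.
suff w_lt_m k v : rk v = k -> w v < w m by have := w_lt_m _ m erefl; rewrite ltxx.
elim/ltn_ind: k v => k IH v rk_v; rewrite lt_neqAle w_le_m andbT.
apply/eqP => w_v.
have v_T : v \notin T by apply: contraTN m_gt0 => /w_T; rewrite w_v leNgt.
have /(w_desc v v_T) [v' Q_v' rk_v'] : 0 < w v by rewrite w_v.
have := w_sub v v_T; rewrite w_v leNgt => /negP; apply.
apply: convex_comb_lt Q_v' (IH _ _ _ erefl) => //; first exact: Q_row_sum.
by rewrite -rk_v.
Qed.

End MaximumPrinciple.

Lemma ninf_le_refl (a : ninf) : ninf_le a a.
Proof. by case: a => /=. Qed.

Lemma ninf_le_trans (a b c : ninf) : ninf_le a b -> ninf_le b c -> ninf_le a c.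
Proof. by case: a b c => [a|] [b|] [c|] //=; apply: leq_trans. Qed.

Lemma ninf_le_total (a b : ninf) : ninf_le a b || ninf_le b a.
Proof. by case: a b => [a|] [b|] //=; apply: leq_total. Qed.

Lemma ninf_le_maxl (a b : ninf) : ninf_le a (ninf_max a b).
Proof. by rewrite /ninf_max; case: ifP => // _; apply: ninf_le_refl. Qed.

Lemma ninf_le_maxr (a b : ninf) : ninf_le b (ninf_max a b).
Proof.
rewrite /ninf_max; case: ifP => [_|/negbT a_gt_b]; first exact: ninf_le_refl.
by have /orP[] := ninf_le_total a b; rewrite ?(negbTE a_gt_b).
Qed.

Lemma ninf_le_bigmax (I : finType) (p : pred I) (F : I -> ninf) j :
  p j -> ninf_le (F j) (\big[ninf_max/Some 0%N]_(i | p i) F i).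
Proof.
move=> pj; elim: (index_enum I) (mem_index_enum j) => // i s IH.
rewrite inE big_cons => /predU1P[<- | js]; first by rewrite pj ninf_le_maxl.
case: (p i); last exact: IH.
exact: ninf_le_trans (IH js) (ninf_le_maxr _ _).
Qed.

Lemma bigmin_le_Some (I : finType) (p : pred I) (F : I -> ninf) m :
  ninf_le (\big[ninf_min/None]_(i | p i) F i) (Some m) ->
  exists2 i, p i & ninf_le (F i) (Some m).
Proof.
elim/big_rec: _ => // i b pi IH; rewrite /ninf_min.
by case: ifP => _ F_le; [exists i | apply: IH].
Qed.

Lemma Dmax_descent (R : realType) (S A : finType) (P : S -> A -> S -> R)
    (T : {set S}) (r : S -> ninf) u a k :
  u \notin T -> Act P u a -> ninf_le (Dmax P T r u) (Some k) ->
  exists2 v, Post P u a v & exists2 j, r v = Some j & (j < k)%N.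
Proof.
rewrite /Dmax => /negbTE-> a_en.
case E: (\big[ninf_max/_]_(b | Act P u b) _) => [m|] //= m_lt_k.
have := ninf_le_bigmax (fun b => \big[ninf_min/None]_(v | Post P u b v) r v) a_en.
rewrite E => /bigmin_le_Some[v Post_v].
case r_v: (r v) => [j|] //= j_le_m; exists v => //; exists j => //.
exact: leq_ltn_trans j_le_m m_lt_k.
Qed.

Lemma Bmin_le_action (R : realType) (S A : finType) (P : S -> A -> S -> R)
    (T : {set S}) (x : S -> R) u a :
  (forall b v, 0 <= P u b v) -> (forall v, 0 <= x v) ->
  u \notin T -> Act P u a -> Bmin P T x u <= \sum_v P u a v * x v.
Proof.
move=> P_ge0 x_ge0 /negbTE u_T a_en; rewrite /Bmin u_T.
rewrite (bigID (Post P u a)) /= [X in _ + X]big1 => [|v]; rewrite ?addr0.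
  apply: ge_inf; last by exists a.
  by exists 0 => _ [b _ <-]; apply: sumr_ge0 => v _; apply: mulr_ge0.
rewrite /Post -leNgt => P_le0.
suff -> : P u a v = 0 by rewrite mul0r.
by apply/le_anti; rewrite P_le0 P_ge0.
Qed.

Lemma strategy_exists (R : realType) (S A : finType) (P : S -> A -> S -> R) :
  (forall s, exists a, \sum_s' P s a s' = 1) -> exists sigma, is_strategy P sigma.
Proof. by move=> /fin_all_exists[sigma sigma_en]; exists sigma => s; apply/eqP. Qed.

Section Reachability.
Variables (R : realType) (S A : finType) (P : S -> A -> S -> R).
Variables (T : {set S}) (sigma : S -> A).
Hypothesis P_ge0 : forall s a s', 0 <= P s a s'.
Hypothesis sigma_strategy : is_strategy P sigma.

Lemma strategy_row_sum u : \sum_v P u (sigma u) v = 1.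
Proof. exact/eqP/sigma_strategy. Qed.

Lemma reach_within_in n u : u \in T -> reach_within P T sigma n u = 1.
Proof. by case: n => [|n] /= ->. Qed.

Lemma reach_withinS n u : u \notin T ->
  reach_within P T sigma n.+1 u =
  \sum_v P u (sigma u) v * reach_within P T sigma n v.
Proof. by rewrite /= => /negbTE->. Qed.

Lemma reach_within_bounds n u : 0 <= reach_within P T sigma n u <= 1.
Proof.
elim: n u => [|n IH] u; first by rewrite /=; case: ifP; rewrite lexx ler01.
have [u_T|u_T] := boolP (u \in T); first by rewrite reach_within_in // lexx ler01.
rewrite reach_withinS // sumr_ge0 /= => [|v _].
  rewrite -(strategy_row_sum u) ler_sum // => v _.
  by rewrite ler_piMr // (andP (IH v)).2.
by rewrite mulr_ge0 // (andP (IH v)).1.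
Qed.

Lemma reach_within_leS n u :
  reach_within P T sigma n u <= reach_within P T sigma n.+1 u.
Proof.
have [u_T|u_T] := boolP (u \in T); first by rewrite !reach_within_in.
elim: n u u_T => [|n IH] u u_T; rewrite reach_withinS //.
  rewrite /= (negbTE u_T) sumr_ge0 // => v _.
  by rewrite mulr_ge0 // (andP (reach_within_bounds 0 v)).1.
rewrite reach_withinS // ler_sum // => v _; rewrite ler_wpM2l //.
by have [v_T|v_T] := boolP (v \in T); [rewrite !reach_within_in | apply: IH].
Qed.

Lemma reach_within_nondecreasing u :
  {homo (fun n => reach_within P T sigma n u) : m n / (m <= n)%N >-> m <= n}.
Proof.
by apply: homo_leq => [//|? ? ?|n]; [apply: le_trans | apply: reach_within_leS].
Qed.

Lemma reach_within_has_ubound u :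
  has_ubound (range (fun n => reach_within P T sigma n u)).
Proof. by exists 1 => _ [n _ <-]; rewrite (andP (reach_within_bounds n u)).2. Qed.

Lemma reach_within_le_Pr_reach n u :
  reach_within P T sigma n u <= Pr_reach P T sigma u.
Proof. by apply: ub_le_sup; [apply: reach_within_has_ubound | exists n]. Qed.

Lemma Pr_reach_ge0 u : 0 <= Pr_reach P T sigma u.
Proof.
exact: le_trans (andP (reach_within_bounds 0 u)).1 (reach_within_le_Pr_reach 0 u).
Qed.

Lemma Pr_reach_in u : u \in T -> Pr_reach P T sigma u = 1.
Proof.
move=> u_T; apply/le_anti.
rewrite -{2}(reach_within_in 0 u_T) reach_within_le_Pr_reach andbT.
apply: ge_sup => [|_ [n _ <-]]; last by rewrite reach_within_in.
by exists (reach_within P T sigma 0 u), 0%N.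
Qed.

Lemma Pr_reach_superharmonic u : u \notin T ->
  \sum_v P u (sigma u) v * Pr_reach P T sigma v <= Pr_reach P T sigma u.
Proof.
move=> u_T; apply: (sum_sup_le (P_ge0 u (sigma u)) (strategy_row_sum u)).
- exact: reach_within_nondecreasing.
- exact: reach_within_has_ubound.
by move=> n; rewrite -reach_withinS //; apply: reach_within_le_Pr_reach.
Qed.

Lemma le_Pr_reach (x : S -> R) (r : S -> ninf) :
  (forall s, 0 <= x s <= 1) ->
  (forall s, ninf_le (Dmax P T r s) (r s)) ->
  (forall s, x s <= Bmin P T x s) ->
  (forall s, s \notin T -> 0 < x s -> r s <> None) ->
  forall s, x s <= Pr_reach P T sigma s.
Proof.
move=> x_bounds Dmax_le_r x_le_Bmin r_fin s; rewrite -subr_le0.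
have x_ge0 v : 0 <= x v by case/andP: (x_bounds v).
apply: (@subharmonic_le0 _ _ (fun u v => P u (sigma u) v) T _
          (fun u _ => strategy_row_sum u) (fun v => x v - Pr_reach P T sigma v)
          (fun v => odflt 0%N (r v))) => // u u_T.
- by rewrite Pr_reach_in // subr_le0 (andP (x_bounds u)).2.
- rewrite (eq_bigr _ (fun v _ => mulrBr _ _ _)) sumrB lerB //.
    apply: le_trans (x_le_Bmin u) _.
    exact: Bmin_le_action (P_ge0 u) x_ge0 u_T (sigma_strategy u).
  exact: Pr_reach_superharmonic.
move=> w_gt0; have x_gt0 : 0 < x u.
  by apply: lt_le_trans w_gt0 _; rewrite lerBlDr lerDl Pr_reach_ge0.
case r_u: (r u) => [k|]; last by have := r_fin u u_T x_gt0; rewrite r_u.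
have := Dmax_le_r u; rewrite r_u => /(Dmax_descent u_T (sigma_strategy u)).
by case=> v Post_v [j r_v j_lt_k]; exists v => //; rewrite r_v.
Qed.

End Reachability.

Theorem proposition4 (R : realType) (S A : finType) (P : S -> A -> S -> R)
    (T : {set S}) (x : S -> R) (r : S -> ninf) :
  is_MDP P ->
  (forall s, 0 <= x s <= 1) ->
  (forall s, ninf_le (Dmax P T r s) (r s)) ->
  (forall s, x s <= Bmin P T x s) ->
  (forall s, s \notin T -> 0 < x s -> r s <> None) ->
  forall s, x s <= Pr_min_reach P T s.
Proof.
move=> [P_bounds [_ Act_nonempty]] x_bounds Dmax_le_r x_le_Bmin r_fin s.
have P_ge0 u a v : 0 <= P u a v by case/andP: (P_bounds u a v).
have [sigma0 sigma0_strategy] := strategy_exists Act_nonempty.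
apply: lb_le_inf; first by exists (Pr_reach P T sigma0 s), sigma0.
by move=> _ [sigma sigma_strategy <-]; apply: le_Pr_reach.
Qed.
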